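(* Let $n,m,k$ be integers with $n\geq m\geq 1$ and $k\geq 3$. Then $$ gr_{k}(K_{3} : S(n,m))\geq \begin{cases} \max\{5\cdot\frac{n}{2},\,n+2m+1\} + m(k-3)+1 & \text{ if $n$ is even,}\\ \max\{5\cdot\frac{n-1}{2},\,n+2m+1\}+ m(k-3)+ 2 & \text{ if $n$ is odd.} \end{cases} $$
   Context: For integers $n\geq m\geq 0$, the double star $S(n,m)$ is the graph obtained from the disjoint union of the stars $K_{1,n}$ and $K_{1,m}$ by adding an edge between their centers. A $k$-coloring of a graph is an assignment of one of $k$ colors to each edge. A subgraph is rainbow if all its edges have distinct colors and monochromatic if all its edges have the same color. For graphs $G,H$ and a positive integer $k$, the Gallai–Ramsey number $gr_k(G:H)$ is the minimum integer $N$ such that every $k$-coloring of the edges of the complete graph $K_N$ contains either a rainbow copy of $G$ or a monochromatic copy of $H$. *)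

From mathcomp Require Import all_boot.
Set Implicit Arguments. Unset Strict Implicit. Unset Printing Implicit Defensive.

(* A graph H is given by a finite vertex type V and a symmetric,
   irreflexive adjacency relation. *)

(* A k-coloring of the edges of K_N: a symmetric map c : 'I_N -> 'I_N -> 'I_k
   (its values on the diagonal are irrelevant). *)
Definition edge_coloring (N k : nat) (c : 'I_N -> 'I_N -> 'I_k) : Prop :=
  forall x y, c x y = c y x.

(* A copy of H in K_N: an injective vertex map (K_N is complete, so every
   injective map is an embedding of H as a subgraph). *)

Definition rainbow_copy (V : finType) (e : rel V) (N k : nat)
    (c : 'I_N -> 'I_N -> 'I_k) (f : V -> 'I_N) : Prop :=
  injective f /\
  forall x y x' y', e x y -> e x' y' ->
    ~ ((x = x' /\ y = y') \/ (x = y' /\ y = x')) ->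
    c (f x) (f y) <> c (f x') (f y').

Definition mono_copy (V : finType) (e : rel V) (N k : nat)
    (c : 'I_N -> 'I_N -> 'I_k) (f : V -> 'I_N) : Prop :=
  injective f /\
  forall x y x' y', e x y -> e x' y' -> c (f x) (f y) = c (f x') (f y').

Definition K3_rel : rel 'I_3 := fun i j => i != j.

(* Double star S(n,m) on 'I_(n+m+2): vertex 0 is the center of K_{1,n},
   vertex 1 the center of K_{1,m}; vertices 2..n+1 are the n leaves of 0,
   vertices n+2..n+m+1 are the m leaves of 1; plus the edge 0-1. *)
Definition ds_adj (n m : nat) (i j : 'I_(n + m + 2)) : bool :=
  [|| ((i : nat) == 0) && ((j : nat) == 1),
      ((i : nat) == 0) && (2 <= j) && (j < n + 2)
    | ((i : nat) == 1) && (n + 2 <= j)].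

Arguments ds_adj : clear implicits.
Definition double_star_rel (n m : nat) : rel 'I_(n + m + 2) :=
  fun i j => ds_adj n m i j || ds_adj n m j i.

Definition GR_property (VG : finType) (eG : rel VG) (VH : finType) (eH : rel VH)
    (k N : nat) : Prop :=
  forall c : 'I_N -> 'I_N -> 'I_k, edge_coloring c ->
    (exists f : VG -> 'I_N, rainbow_copy eG c f) \/
    (exists f : VH -> 'I_N, mono_copy eH c f).

(* gr_k(G:H) >= L  iff  L <= every N with the GR property (gr is the least such N). *)
Definition gr_ge (VG : finType) (eG : rel VG) (VH : finType) (eH : rel VH)
    (k L : nat) : Prop :=
  forall N, GR_property eG eH k N -> L <= N.
Arguments double_star_rel : clear implicits.

From mathcomp Require Import all_boot zify.
Set Implicit Arguments. Unset Strict Implicit. Unset Printing Implicit Defensive.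

(* The bound is witnessed by Gallai colourings (no rainbow triangle) of K_N
   without monochromatic S(n,m), built in two stages.  The base is a colouring
   of K_b with colours below o and no monochromatic S(n,m): either the blow-up
   of the pentagon/pentagram 2-colouring of K_5 into parts of size about n/2,
   with colour 0 inside the parts (b = 5 (n %/ 2) + odd n, o = 3; no vertex
   has more than n neighbours of one colour), or one colour on fewer than
   n + m + 2 vertices (b = n + 1 + odd n, o = 1).  Then r = k - o blocks of
   m vertices are appended: edges inside a block get colour 0 and edges from
   block j to all earlier vertices get the new colour o + j.  Every triangle
   repeats a colour.  A monochromatic S(n,m) with central edge uv cannot leave
   the base, as edges leaving it have colours at least o; a central edge
   inside a block, or from below into a block, puts the n + 1 > m neighbours
   of u into that block, and a central edge from a block down to v puts u and
   the m leaves of v into it. *)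

Definition not_rainbow (a1 a2 a3 : nat) : Prop := a1 = a2 \/ a2 = a3 \/ a1 = a3.

Definition gallai_on (N : nat) (col : nat -> nat -> nat) : Prop :=
  forall x y z, x < N -> y < N -> z < N -> not_rainbow (col x y) (col y z) (col x z).

(* Vertex [i] of [S(n,m)], numbered as in [double_star_rel], is sent to [F i]. *)
Definition mono_double_star (n m : nat) (col : nat -> nat -> nat) (F : nat -> nat) :=
  [/\ {in iota 0 (n + m + 2) &, injective F},
      forall i, 1 <= i < n + 2 -> col (F 0) (F i) = col (F 0) (F 1)
    & forall i, n + 2 <= i < n + m + 2 -> col (F 1) (F i) = col (F 0) (F 1)].

Definition no_mono_double_star_on (N n m : nat) (col : nat -> nat -> nat) : Prop :=
  forall F, (forall i, i < n + m + 2 -> F i < N) -> ~ mono_double_star n m col F.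

Lemma leq_size_inj_in (F : nat -> nat) (t s : seq nat) :
  uniq t -> {in t &, injective F} -> (forall i, i \in t -> F i \in s) ->
  size t <= size s.
Proof.
move=> t_uniq F_inj F_t; rewrite -(size_map F); apply: uniq_leq_size.
  by rewrite map_inj_in_uniq.
by move=> _ /mapP[i ti ->]; apply: F_t.
Qed.

Lemma gallai_on_sorted N (col : nat -> nat -> nat) :
  (forall x y, col x y = col y x) ->
  (forall x y z, x <= y <= z -> z < N -> not_rainbow (col x y) (col y z) (col x z)) ->
  gallai_on N col.
Proof.
move=> col_sym sorted x y z xN yN zN.
have := sorted x y z; have := sorted x z y; have := sorted y x z.
have := sorted y z x; have := sorted z x y; have := sorted z y x.
rewrite /not_rainbow !(col_sym y x) !(col_sym z x) !(col_sym z y); lia.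
Qed.

Lemma no_mono_double_star_on_small N n m col :
  N < n + m + 2 -> no_mono_double_star_on N n m col.
Proof.
move=> small F F_lt [F_inj _ _].
have F_iota i : i \in iota 0 (n + m + 2) -> F i \in iota 0 N.
  by rewrite !mem_iota => /andP[_ /F_lt ->].
by have := leq_size_inj_in (iota_uniq 0 _) F_inj F_iota; rewrite !size_iota; lia.
Qed.

Lemma gallai_coloring_not_GR n m k N (col : nat -> nat -> nat) :
  (forall x y, col x y = col y x) -> (forall x y, x < N -> y < N -> col x y < k) ->
  gallai_on N col -> no_mono_double_star_on N n m col ->
  ~ GR_property K3_rel (double_star_rel n m) k N.
Proof.
move=> col_sym col_lt gallai no_mono GR.
pose c (x y : 'I_N) : 'I_k := Ordinal (col_lt x y (ltn_ord x) (ltn_ord y)).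
have c_sym : edge_coloring c by move=> x y; apply: val_inj; rewrite /= col_sym.
have c_eq x y x' y' : c x y = c x' y' -> col x y = col x' y' by move/(congr1 val).
have [[f [_ f_rainbow]] | [f [f_inj f_mono]]] := GR c c_sym.
  pose i0 := @Ordinal 3 0 isT; pose i1 := @Ordinal 3 1 isT; pose i2 := @Ordinal 3 2 isT.
  have rainbow i j i' j' : i != j -> i' != j' -> ~ ((i = i' /\ j = j') \/ (i = j' /\ j = i')) ->
      col (f i) (f j) <> col (f i') (f j').
    by move=> ij ij' neq E; apply: (f_rainbow i j i' j') => //; apply: val_inj.
  have := gallai _ _ _ (ltn_ord (f i0)) (ltn_ord (f i1)) (ltn_ord (f i2)).
  by case=> [|[]]; apply: rainbow => // -[[]|[]].
pose F i := if insub i is Some j then val (f j : 'I_N) else 0.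
have FE i (lt_i : i < n + m + 2) : F i = f (Ordinal lt_i) by rewrite /F insubT.
have adj i j (lt_i : i < n + m + 2) (lt_j : j < n + m + 2) :
    double_star_rel n m (Ordinal lt_i) (Ordinal lt_j) ->
    col (F i) (F j) = col (F 0) (F 1).
  have lt_0 : 0 < n + m + 2 by lia.
  have lt_1 : 1 < n + m + 2 by lia.
  by move=> e; rewrite !FE; apply: c_eq; apply: f_mono.
apply: (no_mono F).
  by move=> i lt_i; rewrite (FE i lt_i).
split.
- move=> i j; rewrite !mem_iota /= => lt_i lt_j.
  by rewrite (FE i lt_i) (FE j lt_j) => /val_inj /f_inj [].
- move=> i /andP[i_ge1 i_lt]; have lt_i : i < n + m + 2 by lia.
  by apply: (adj 0 i _ lt_i); rewrite /double_star_rel /ds_adj /=; lia.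
- move=> i /andP[i_ge i_lt].
  by apply: (adj 1 i _ i_lt); rewrite /double_star_rel /ds_adj /=; lia.
Qed.

Section BlockExtension.

Variables (b m o : nat) (beta : nat -> nat -> nat).
Hypothesis m_gt0 : 0 < m.
Hypothesis o_gt0 : 0 < o.
Hypothesis beta_sym : forall x y, beta x y = beta y x.
Hypothesis beta_lt : forall x y, x < b -> y < b -> beta x y < o.

(* Block [j] is [b + j * m, ..., b + j * m + m - 1]; note that [block x = 0]
   also for the base vertices [x < b]. *)
Definition block x := (x - b) %/ m.
Definition in_block j x := (b <= x) && (block x == j).
Definition below j x := (x < b) || (block x < j).

Definition block_ext x y :=
  if (x < b) && (y < b) then beta x y
  else if [&& b <= x, b <= y & block x == block y] then 0
  else o + maxn (block x) (block y).

Lemma block_small x : x < b -> block x = 0.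
Proof. by move=> x_lt; rewrite /block (_ : x - b = 0) ?div0n //; lia. Qed.

Lemma block_mono : {homo block : x y / x <= y}.
Proof. by move=> x y le_xy; rewrite /block leq_div2r // leq_sub2r. Qed.

Lemma block_lt r x : b <= x -> x < b + m * r -> block x < r.
Proof. by move=> x_ge x_lt; rewrite /block ltn_divLR //; lia. Qed.

Lemma in_block_iota j x : in_block j x -> x \in iota (b + j * m) m.
Proof.
case/andP=> x_ge /eqP <-; rewrite mem_iota /block.
by have := divn_eq (x - b) m; have := ltn_pmod (x - b) m_gt0; lia.
Qed.

Lemma below_or_in_block x y : x <= y -> b <= y -> below (block y) x || in_block (block y) x.
Proof. by move=> le_xy y_ge; have := block_mono le_xy; rewrite /below /in_block; lia. Qed.

Lemma block_ext_base x y : x < b -> y < b -> block_ext x y = beta x y.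
Proof. by move=> x_lt y_lt; rewrite /block_ext x_lt y_lt. Qed.

Lemma block_ext_in_block j x y : in_block j x -> in_block j y -> block_ext x y = 0.
Proof.
case/andP=> x_ge /eqP bx /andP[y_ge /eqP by_].
by rewrite /block_ext ltnNge x_ge /= y_ge bx by_ eqxx.
Qed.

Lemma block_ext_below j x y : below j x -> in_block j y -> block_ext x y = o + j.
Proof.
move=> x_below /andP[y_ge /eqP by_]; rewrite /block_ext (ltnNge y) y_ge andbF by_.
move: x_below; rewrite /below; case: (ltnP x b) => [x_lt _ | x_ge /= bx_lt].
  by rewrite block_small // max0n.
by rewrite (ltn_eqF bx_lt) (maxn_idPr (ltnW bx_lt)).
Qed.

Lemma block_ext_sym x y : block_ext x y = block_ext y x.
Proof.
rewrite /block_ext beta_sym maxnC eq_sym.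
by case: (x < b); case: (y < b); case: (b <= x); case: (b <= y).
Qed.

Lemma block_ext_lt r x y : x < b + m * r -> y < b + m * r -> block_ext x y < o + r.
Proof.
move=> x_lt y_lt; rewrite /block_ext.
case: ifP => [/andP[x_small y_small] | not_base]; first by have := beta_lt x_small y_small; lia.
case: ifP => _; first by lia.
have block_x := @block_lt r x; have block_y := @block_lt r y.
have := @block_small x; have := @block_small y; lia.
Qed.

Lemma block_ext_sorted x y z : gallai_on b beta -> x <= y <= z ->
  not_rainbow (block_ext x y) (block_ext y z) (block_ext x z).
Proof.
move=> gallai /andP[le_xy le_yz].
have [z_lt | z_ge] := ltnP z b.
  have y_lt : y < b by lia.
  have x_lt : x < b by lia.
  by rewrite !block_ext_base //; apply: gallai.
have z_in : in_block (block z) z by rewrite /in_block z_ge eqxx.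
have [y_lt | y_ge] := ltnP y b.
  have x_below : below (block z) x by rewrite /below; lia.
  have y_below : below (block z) y by rewrite /below y_lt.
  by right; left; rewrite !(block_ext_below _ z_in).
have y_in : in_block (block y) y by rewrite /in_block y_ge eqxx.
have x_pos := below_or_in_block le_xy y_ge.
have [eq_yz | neq_yz] := eqVneq (block y) (block z).
  rewrite -eq_yz in z_in; right; right.
  case/orP: x_pos => [x_below | x_in].
    by rewrite !(block_ext_below x_below).
  by rewrite !(block_ext_in_block x_in).
have lt_yz : block y < block z by rewrite ltn_neqAle neq_yz block_mono.
have y_below : below (block z) y by rewrite /below lt_yz orbT.
have x_below : below (block z) x.
  by case/orP: x_pos; rewrite /below /in_block; lia.
by right; left; rewrite !(block_ext_below _ z_in).
Qed.

Lemma block_ext_gallai N : gallai_on b beta -> gallai_on N block_ext.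
Proof.
by move=> gallai; apply: gallai_on_sorted => [|x y z sorted _];
  [exact: block_ext_sym | exact: block_ext_sorted].
Qed.

Lemma block_ext_base_closed x y : x < b -> block_ext x y < o -> y < b.
Proof.
move=> x_lt; apply: contraTT; rewrite -leqNgt => y_ge.
by rewrite /block_ext (ltnNge y) y_ge andbF (leqNgt b x) x_lt /=; lia.
Qed.

Lemma in_block_block_ext0 j x y : in_block j x -> block_ext x y = 0 -> in_block j y.
Proof.
case/andP=> x_ge /eqP <-; rewrite /block_ext /in_block ltnNge x_ge /=.
by case: ifP => [/andP[-> /eqP ->] | _] //; lia.
Qed.

Lemma in_block_block_ext_below j x y : below j x -> block_ext x y = o + j -> in_block j y.
Proof.
rewrite /below /block_ext /in_block => x_below.
have := @block_small x; have := @block_small y.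
case: ifP => [/andP[x_lt y_lt] | not_base]; first by have := beta_lt x_lt y_lt; lia.
by case: ifP; lia.
Qed.

Lemma block_card (F : nat -> nat) j t : uniq t -> {in t &, injective F} ->
  (forall i, i \in t -> in_block j (F i)) -> size t <= m.
Proof.
move=> t_uniq F_inj F_in; rewrite -(size_iota (b + j * m) m).
by apply: leq_size_inj_in F_inj _ => // i /F_in /in_block_iota.
Qed.

Lemma block_ext_edge_cases u v : ~~ ((u < b) && (v < b)) ->
  [\/ in_block (block u) u /\ in_block (block u) v,
      below (block v) u /\ in_block (block v) v
    | below (block u) v /\ in_block (block u) u].
Proof.
wlog le_uv : u v / u <= v => [hwlog|].
  have [le_uv | /ltnW le_vu] := leqP u v; first exact: hwlog.
  rewrite andbC => /(hwlog _ _ le_vu) [[v_in u_in] | [] | []]; [|by constructor 3|by constructor 2].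
  by constructor 1; rewrite (eqP (proj2 (andP u_in))); split.
move=> not_base; have v_ge : b <= v by lia.
have v_in : in_block (block v) v by rewrite /in_block v_ge eqxx.
case/orP: (below_or_in_block le_uv v_ge) => [u_below | u_in]; first by constructor 2.
by constructor 1; rewrite (eqP (proj2 (andP u_in))); split.
Qed.

Lemma block_ext_no_mono n F : m <= n -> no_mono_double_star_on b n m beta ->
  ~ mono_double_star n m block_ext F.
Proof.
move=> le_mn base [F_inj star_u star_v].
have inj_on t : {subset t <= iota 0 (n + m + 2)} -> {in t &, injective F}.
  by move=> sub_t; apply: sub_in2 F_inj.
have leaves_u_in_block j : (forall i, 1 <= i < n + 2 -> in_block j (F i)) -> False.
  move=> leaves_in; suff: n + 1 <= m by lia.
  rewrite -(size_iota 1 (n + 1)); apply: (@block_card F j _ (iota_uniq _ _)).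
    by apply: inj_on => i; rewrite !mem_iota; lia.
  by move=> i; rewrite mem_iota => ?; apply: leaves_in; lia.
have [/andP[u_lt v_lt] | not_base] := boolP ((F 0 < b) && (F 1 < b)).
  have F_lt i : i < n + m + 2 -> F i < b.
    have center_lt := beta_lt u_lt v_lt; rewrite -block_ext_base // in center_lt.
    move=> i_lt; have [i_lt2 | i_ge2] := ltnP i (n + 2).
      have [-> // | i_gt0] := posnP i.
      by apply: (block_ext_base_closed u_lt); rewrite star_u ?i_gt0.
    by apply: (block_ext_base_closed v_lt); rewrite star_v ?i_ge2 // block_ext_sym.
  apply: (base F F_lt); split => // i /andP[i_ge i_lt].
    by rewrite -!block_ext_base ?F_lt ?star_u ?i_ge //; lia.
  by rewrite -!block_ext_base ?F_lt ?star_v ?i_ge //; lia.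
have [[u_in v_in] | [u_below v_in] | [v_below u_in]] := block_ext_edge_cases not_base.
- apply: (leaves_u_in_block (block (F 0))) => i i_range.
  by apply: (in_block_block_ext0 u_in); rewrite star_u // (block_ext_in_block u_in v_in).
- apply: (leaves_u_in_block (block (F 1))) => i i_range.
  by apply: (in_block_block_ext_below u_below); rewrite star_u // (block_ext_below u_below v_in).
suff: m.+1 <= m by rewrite ltnn.
have -> : m.+1 = size (0 :: iota (n + 2) m) by rewrite /= size_iota.
apply: (@block_card F (block (F 0))).
- by rewrite /= iota_uniq mem_iota andbT addn2.
- by apply: inj_on => i; rewrite inE !mem_iota; lia.
move=> i; rewrite inE mem_iota => /predU1P[-> // | i_range].
have i_leaf : n + 2 <= i < n + m + 2 by lia.
apply: (in_block_block_ext_below v_below).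
by rewrite star_v // block_ext_sym (block_ext_below v_below u_in).
Qed.

Lemma block_ext_not_GR n k r N :
  m <= n -> o + r <= k -> N <= b + m * r ->
  gallai_on b beta -> no_mono_double_star_on b n m beta ->
  ~ GR_property K3_rel (double_star_rel n m) k N.
Proof.
move=> le_mn colors_le N_le gallai base; apply: (gallai_coloring_not_GR (col := block_ext)).
- exact: block_ext_sym.
- move=> x y x_lt y_lt; apply: leq_trans colors_le.
  by apply: block_ext_lt; apply: leq_trans N_le.
- exact: block_ext_gallai.
- by move=> F _; apply: block_ext_no_mono.
Qed.

End BlockExtension.

Definition c5_part (h x : nat) : nat := if x < 4 * h then x %/ h else 4.

(* [(p - q) + (q - p)] is [|p - q|]: colour 1 on the pentagon 0-1-2-3-4-0,
   colour 2 on the pentagram. *)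
Definition c5_color (p q : nat) : nat :=
  if p == q then 0 else if (p - q) + (q - p) \in [:: 1; 4] then 1 else 2.

Definition c5_coloring (h x y : nat) : nat := c5_color (c5_part h x) (c5_part h y).

Definition c5_part_seq (h b q : nat) : seq nat :=
  iota (q * h) (if q == 4 then b - 4 * h else h).

Lemma c5_part_lt h x : c5_part h x < 5.
Proof.
rewrite /c5_part; case: ifP => // x_lt.
by rewrite ltn_divLR; lia.
Qed.

Lemma c5_color_lt p q : c5_color p q < 3.
Proof. by rewrite /c5_color; case: ifP => //; case: ifP. Qed.

Lemma c5_color_sym p q : c5_color p q = c5_color q p.
Proof. by rewrite /c5_color eq_sym addnC. Qed.

Lemma c5_color_gallai p q r : p < 5 -> q < 5 -> r < 5 ->
  not_rainbow (c5_color p q) (c5_color q r) (c5_color p r).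
Proof.
case: p => [|[|[|[|[|p]]]]] //; case: q => [|[|[|[|[|q]]]]] //;
  case: r => [|[|[|[|[|r]]]]] // _ _ _; rewrite /not_rainbow /c5_color /=; lia.
Qed.

Lemma c5_coloring_gallai h N : gallai_on N (c5_coloring h).
Proof. by move=> x y z _ _ _; apply: c5_color_gallai; apply: c5_part_lt. Qed.

Lemma mem_c5_part_seq h b x : 4 * h <= b -> x < b -> x \in c5_part_seq h b (c5_part h x).
Proof.
move=> hb x_lt; rewrite /c5_part_seq /c5_part mem_iota.
case: ifP => [x_small | x_large]; last by rewrite eqxx; lia.
have h_gt0 : 0 < h by lia.
have := divn_eq x h; have := ltn_pmod x h_gt0; have : x %/ h < 4 by rewrite ltn_divLR.
by case: eqP; lia.
Qed.

Lemma size_c5_neighbourhood h b p c : 5 * h <= b -> p < 5 ->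
  size (flatten [seq c5_part_seq h b q | q <- iota 0 5 & c5_color p q == c]) <= b - 3 * h.
Proof.
move=> hb; case: p => [|[|[|[|[|p]]]]] // _; case: c => [|[|[|c]]];
  rewrite /= /c5_part_seq /= ?size_cat ?size_iota /=; lia.
Qed.

Lemma c5_no_mono_double_star h b n m : 5 * h <= b -> b <= n + 3 * h ->
  no_mono_double_star_on b n m (c5_coloring h).
Proof.
move=> hb b_le F F_lt [F_inj star_u _].
suff: n + 1 <= b - 3 * h by lia.
apply: leq_trans (size_c5_neighbourhood (c5_coloring h (F 0) (F 1)) hb (c5_part_lt h (F 0))).
rewrite -(size_iota 1 (n + 1)); apply: leq_size_inj_in (iota_uniq _ _) _ _.
  by apply: sub_in2 F_inj => i; rewrite !mem_iota; lia.
move=> i; rewrite mem_iota => i_range; have F_i_lt : F i < b by apply: F_lt; lia.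
apply/flatten_mapP; exists (c5_part h (F i)); last by apply: mem_c5_part_seq; lia.
by rewrite mem_filter mem_iota c5_part_lt andbT leq0n andbT; apply/eqP; apply: star_u; lia.
Qed.

Theorem proposition3 (n m k : nat) :
  1 <= m -> m <= n -> 3 <= k ->
  gr_ge K3_rel (double_star_rel n m) k
    (if ~~ odd n then maxn (5 * (n %/ 2)) (n + 2 * m + 1) + m * (k - 3) + 1
     else maxn (5 * ((n - 1) %/ 2)) (n + 2 * m + 1) + m * (k - 3) + 2).
Proof.
move=> m_gt0 le_mn k_ge3 N GR; rewrite leqNgt; apply/negP => N_lt.
set h := n %/ 2; set od := nat_of_bool (odd n).
have n_eq : n = 2 * h + od by rewrite /h /od; lia.
have N_le : N <= maxn (5 * h + od) (n + 2 * m + 1 + od) + m * (k - 3).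
  by move: N_lt; rewrite /h /od; case: ifP; lia.
have [le_star_c5 | lt_c5_star] := leqP (n + 2 * m + 1) (5 * h).
  apply: (@block_ext_not_GR (5 * h + od) m 3 (c5_coloring h) m_gt0 isT _ _ n k (k - 3) N le_mn) GR.
  - by move=> x y; rewrite /c5_coloring c5_color_sym.
  - by move=> x y _ _; apply: c5_color_lt.
  - lia.
  - lia.
  - exact: c5_coloring_gallai.
  - by apply: c5_no_mono_double_star; lia.
apply: (@block_ext_not_GR (n + 1 + od) m 1 (fun _ _ => 0) m_gt0 isT _ _ n k (k - 1) N le_mn) GR.
- by [].
- by [].
- lia.
- nia.
- by move=> x y z _ _ _; left.
- by apply: no_mono_double_star_on_small; lia.
Qed.
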